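(* Let $\Lambda$ be the eigenspectrum of a $2S\times2S$ quantum CM ($S\ge2$) which satisfies the unique pairing condition but not the $(S-1)$-pure unique pairing condition. Write the unique perfect matching of $G(\Lambda)$ as $S$ pairs of eigenvalues $(\nu_i e^{-2r_i},\nu_i e^{2r_i})$, $i=1,\dots,S$, with $r_i\ge 0$, $\nu_i\ge 1$ and $\nu_1\ge\nu_2\ge\dots\ge\nu_S$ (so $\nu_2>1$), and let $D=\mathrm{diag}(\nu_1e^{-2r_1},\nu_1e^{2r_1},\dots,\nu_Se^{-2r_S},\nu_Se^{2r_S})$. Assume that no value occurs three or more times in the $4$-tuple $(\nu_1e^{-2r_1},\nu_1e^{2r_1},\nu_2e^{-2r_2},\nu_2e^{2r_2})$. Then there exists an orthogonal matrix $O$ such that $O^TDO$ is a quantum CM whose multiset of symplectic eigenvalues differs from $\{\nu_1,\dots,\nu_S\}$. Consequently (1) the set of symplectic eigenvalues (and squeezing parameters) of quantum CMs with eigenspectrum $\Lambda$ is not uniquely determined by $\Lambda$, and (2) there exist two quantum CMs with eigenspectrum $\Lambda$ that are related by an orthogonal transformation but not by any element of $\mathrm{SpO}(2S,\mathbb{R})$.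
   Context: Fix an integer $S\ge 1$. Coordinates of $\mathbb{R}^{2S}$ are ordered as $(q_1,p_1,\dots,q_S,p_S)$; coordinates $2i-1$ and $2i$ form the $i$-th mode. Let $\Omega=\bigoplus_{i=1}^S\begin{pmatrix}0&1\\-1&0\end{pmatrix}$. A real matrix $A$ is symplectic if $A^T\Omega A=\Omega$. $\mathrm{SpO}(2S,\mathbb{R})$ denotes the group of real $2S\times2S$ matrices that are both orthogonal and symplectic. A quantum CM is a real symmetric positive-definite $2S\times 2S$ matrix $\Gamma$ such that $\Gamma+i\Omega$ is positive semidefinite. By Williamson's theorem any real positive-definite $\Gamma$ can be written $\Gamma=A\,\mathrm{diag}(\nu_1,\nu_1,\dots,\nu_S,\nu_S)\,A^T$ with $A$ symplectic; the multiset $\{\nu_i\}$ (the symplectic eigenvalues, or thermal parameters) is uniquely determined by $\Gamma$, and $\Gamma$ is a quantum CM iff all $\nu_i\ge1$. Let $\Lambda=(\lambda_i)_{i=1}^{2S}$ be the eigenvalues of a quantum CM in non-ascending order. Let $G(\Lambda)$ be the graph with vertex set $\{1,\dots,2S\}$ and edge set $\{\{i,j\}: i<j,\ \lambda_i\lambda_j\ge 1\}$; an edge $\{i,j\}$ is pure if $\lambda_i\lambda_j=1$. $\Lambda$ satisfies the unique pairing condition if $G(\Lambda)$ has a unique perfect matching up to permutations of vertices carrying equal eigenvalues. $\Lambda$ satisfies the $t$-pure unique pairing condition if it satisfies the unique pairing condition and at least $t$ of the $S$ edges of this perfect matching are pure. *)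

From HB Require Import structures.
From mathcomp Require Import all_boot all_order fingroup perm all_algebra.
From mathcomp Require Import complex.
From mathcomp Require Import reals exp.
From mathcomp Require Import interval_inference topology normedtype sequences.
Set Implicit Arguments. Unset Strict Implicit. Unset Printing Implicit Defensive.
Import Order.TTheory GRing.Theory Num.Theory.
Local Open Scope ring_scope.

Section Defs.
Variable R : realType.
Variable S : nat.

(* the mode index of a coordinate k (0-based): coordinates 2i, 2i+1 form mode i *)
Definition mode_of (k : 'I_(S.*2)) : 'I_S :=
  Ordinal (etrans (ltn_half_double k S) (ltn_ord k)).

(* Omega = direct sum of [[0,1],[-1,0]] *)
Definition Omega : 'M[R]_(S.*2) :=
  \matrix_(k, l) (if mode_of k == mode_of l then
                    (if ~~ odd k && odd l then 1
                     else if odd k && ~~ odd l then -1 else 0)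
                  else 0).

Definition orthogonal_mx (A : 'M[R]_(S.*2)) : Prop := A^T *m A = 1%:M.
Definition symplectic_mx (A : 'M[R]_(S.*2)) : Prop := A^T *m Omega *m A = Omega.
Definition SpO (A : 'M[R]_(S.*2)) : Prop := orthogonal_mx A /\ symplectic_mx A.

Definition pos_def (G : 'M[R]_(S.*2)) : Prop :=
  forall v : 'cV[R]_(S.*2), v != 0 -> 0 < (v^T *m G *m v) 0 0.

Definition psd_C (M : 'M[R[i]]_(S.*2)) : Prop :=
  forall z : 'cV[R[i]]_(S.*2), 0 <= ((map_mx (@conjc R) z)^T *m M *m z) 0 0.

Definition GammaiOmega (G : 'M[R]_(S.*2)) : 'M[R[i]]_(S.*2) :=
  \matrix_(k, l) Complex (G k l) (Omega k l).

Definition quantum_CM (G : 'M[R]_(S.*2)) : Prop :=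
  G^T = G /\ pos_def G /\ psd_C (GammaiOmega G).

(* Williamson form: G = A diag(nu_1,nu_1,...,nu_S,nu_S) A^T with A symplectic;
   nu is then the (ordered list of) symplectic eigenvalues of G *)
Definition williamson (G : 'M[R]_(S.*2)) (nu : 'I_S -> R) : Prop :=
  exists A, symplectic_mx A /\
    G = A *m diag_mx (\row_k nu (mode_of k)) *m A^T.

Definition same_multiset (nu nu' : 'I_S -> R) : bool :=
  perm_eq [seq nu i | i <- enum 'I_S] [seq nu' i | i <- enum 'I_S].

Definition symp_eigs_differ (G : 'M[R]_(S.*2)) (nu : 'I_S -> R) : Prop :=
  forall nu', williamson G nu' -> ~~ same_multiset nu' nu.

Definition eigenspectrum (G : 'M[R]_(S.*2)) (Lam : 'I_(S.*2) -> R) : Prop :=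
  char_poly G = \prod_k ('X - (Lam k)%:P).

Definition nonascending (Lam : 'I_(S.*2) -> R) : Prop :=
  forall k l : 'I_(S.*2), (k <= l)%N -> Lam l <= Lam k.

(* perfect matchings of G(Lam), as fixed-point-free involutions whose pairs
   {k, m k} are edges (Lam k * Lam (m k) >= 1) *)
Definition perfect_matching (Lam : 'I_(S.*2) -> R) (m : 'I_(S.*2) -> 'I_(S.*2)) :=
  forall k, [/\ m (m k) = k, m k != k & 1 <= Lam k * Lam (m k)].

(* equal up to a permutation of vertices carrying equal eigenvalues *)
Definition matching_equiv (Lam : 'I_(S.*2) -> R) (m m' : 'I_(S.*2) -> 'I_(S.*2)) :=
  exists s : {perm 'I_(S.*2)},
    (forall k, Lam (s k) = Lam k) /\ (forall k, m' (s k) = s (m k)).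

Definition unique_pairing (Lam : 'I_(S.*2) -> R) : Prop :=
  exists m, perfect_matching Lam m /\
    forall m', perfect_matching Lam m' -> matching_equiv Lam m m'.

(* number of pure edges {k, m k} (each counted once, via k < m k) *)
Definition n_pure (Lam : 'I_(S.*2) -> R) (m : 'I_(S.*2) -> 'I_(S.*2)) : nat :=
  #|[set k : 'I_(S.*2) | (k < m k)%N & Lam k * Lam (m k) == 1]|.

Definition t_pure_unique_pairing (t : nat) (Lam : 'I_(S.*2) -> R) : Prop :=
  exists m, perfect_matching Lam m /\
    (forall m', perfect_matching Lam m' -> matching_equiv Lam m m') /\
    (t <= n_pure Lam m)%N.

Definition Ddiag (nu r : 'I_S -> R) (k : 'I_(S.*2)) : R :=
  if odd k then nu (mode_of k) * expR (2 * r (mode_of k))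
  else nu (mode_of k) * expR (- (2 * r (mode_of k))).

Definition Dmat (nu r : 'I_S -> R) : 'M[R]_(S.*2) := diag_mx (\row_k Ddiag nu r k).

End Defs.

From HB Require Import structures.
From mathcomp Require Import all_boot all_order fingroup perm all_algebra.
From mathcomp Require Import complex.
From mathcomp Require Import reals exp.
From mathcomp Require Import interval_inference topology normedtype sequences.
From mathcomp Require Import ring lra zify.
Import Order.TTheory GRing.Theory Num.Theory.
Set Implicit Arguments. Unset Strict Implicit. Unset Printing Implicit Defensive.
Local Open Scope ring_scope.

(* The quantity [tr ((G Omega)^2)] is invariant under symplectic congruence and
   equals [-2 sum_i nu_i^2] for [G] with symplectic eigenvalues [nu], so it only
   depends on their multiset.  Rotate [D] in the plane of a coordinate [x] of the
   first mode and a coordinate [y] of the second one, chosen (by the no-triple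
   hypothesis) with [D_x <> D_y] and [D_x' <> D_y'] for their partners [x'], [y'].
   This keeps the spectrum and shifts the trace by
   [-2 sin^2 theta (D_y - D_x) (D_x' - D_y') <> 0].  For a small angle the result
   is still a quantum CM: as [nu_2 > 1] (otherwise the matching would have [S - 1]
   pure edges), scaling [D_x], [D_y] by [1 / nu_2^2] leaves a valid diagonal CM,
   and the rotation only adds a positive semidefinite block on top of it. *)

Section Modes.
Variable S : nat.
Local Notation n := S.*2.

Lemma coord_subproof (i : 'I_S) (b : bool) : (b + i.*2 < n)%N.
Proof. have := ltn_ord i; rewrite -!addnn; case: b => /=; lia. Qed.

Definition coord (i : 'I_S) (b : bool) : 'I_n := Ordinal (coord_subproof i b).

Lemma mode_of_coord i b : mode_of (coord i b) = i.
Proof. by apply: val_inj => /=; rewrite half_bit_double. Qed.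

Lemma odd_coord i b : odd (coord i b) = b.
Proof. by rewrite /= oddD odd_double addbF; case: b. Qed.

Lemma coord_mode (k : 'I_n) : coord (mode_of k) (odd k) = k.
Proof. by apply: val_inj => /=; rewrite odd_double_half. Qed.

Lemma eq_coordE (k l : 'I_n) :
  (k == l) = (mode_of k == mode_of l) && (odd k == odd l).
Proof.
apply/eqP/andP => [-> //| [/eqP eq_mode /eqP eq_odd]].
by rewrite -(coord_mode k) -(coord_mode l) eq_mode eq_odd.
Qed.

Definition partner (k : 'I_n) : 'I_n := coord (mode_of k) (~~ odd k).

Lemma partner_coord i b : partner (coord i b) = coord i (~~ b).
Proof. by rewrite /partner mode_of_coord odd_coord. Qed.

Lemma mode_of_partner k : mode_of (partner k) = mode_of k.
Proof. exact: mode_of_coord. Qed.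

Lemma odd_partner k : odd (partner k) = ~~ odd k.
Proof. exact: odd_coord. Qed.

Lemma partnerK : involutive partner.
Proof. by move=> k; rewrite /partner mode_of_partner odd_partner negbK coord_mode. Qed.

Lemma partner_inj : injective partner.
Proof. exact: inv_inj partnerK. Qed.

Lemma partner_neq k : partner k != k.
Proof. by rewrite eq_coordE odd_partner; case: (odd k); rewrite andbF. Qed.

Lemma eq_partner_sym k l : (l == partner k) = (k == partner l).
Proof. by apply/eqP/eqP => ->; rewrite partnerK. Qed.

Lemma partner_neq_other_mode k l : mode_of k != mode_of l -> partner k != l.
Proof. by apply: contraNneq => <-; rewrite mode_of_partner. Qed.

Lemma sum_coords {T : nmodType} (F : 'I_n -> T) :
  \sum_k F k = \sum_i (F (coord i false) + F (coord i true)).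
Proof.
rewrite (reindex (fun p : 'I_S * bool => coord p.1 p.2)) /=; last first.
  exists (fun k => (mode_of k, odd k)) => [[i b] _|k _] /=.
    by rewrite mode_of_coord odd_coord.
  exact: coord_mode.
by rewrite -(pair_bigA _ (fun i b => F (coord i b))) /=; apply: eq_bigr => i _; rewrite big_bool addrC.
Qed.

Lemma sum_pick {T : nmodType} (i : 'I_n) (F : 'I_n -> T) :
  \sum_k (if k == i then F k else 0) = F i.
Proof. by rewrite -big_mkcond big_pred1_eq. Qed.

Lemma sum_partner {T : nmodType} (t : 'I_n -> T) :
  \sum_k t (partner k) = \sum_k t k.
Proof. by rewrite [RHS](reindex_inj partner_inj). Qed.

End Modes.

Section Omega.
Variables (R : realType) (S : nat).
Local Notation n := S.*2.
Local Notation Om := (Omega R S).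

Definition omega_sign (k : 'I_n) : R := if odd k then -1 else 1.

Lemma omega_sign_partner k : omega_sign (partner k) = - omega_sign k.
Proof. by rewrite /omega_sign odd_partner; case: (odd k); rewrite ?opprK. Qed.

Lemma omega_sign_sqr k : omega_sign k * omega_sign k = 1.
Proof. by rewrite /omega_sign; case: (odd k); rewrite ?mulrNN mulr1. Qed.

Lemma OmegaE k l : Om k l = if l == partner k then omega_sign k else 0.
Proof.
rewrite mxE eq_coordE mode_of_partner odd_partner /omega_sign eq_sym.
by case: eqP => //= _; case: (odd k); case: (odd l).
Qed.

Lemma Omega_skew k l : Om l k = - Om k l.
Proof.
rewrite !OmegaE eq_partner_sym; case: eqP => [->|]; last by rewrite oppr0.
by rewrite omega_sign_partner.
Qed.

Lemma mulmx_OmegaE (M : 'M[R]_n) i l :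
  (M *m Om) i l = M i (partner l) * omega_sign (partner l).
Proof.
rewrite mxE -(sum_pick (partner l) (fun k => M i k * omega_sign k)).
by apply: eq_bigr => k _; rewrite OmegaE eq_partner_sym; case: ifP; rewrite ?mulr0.
Qed.

Lemma Omega_sqr : Om *m Om = - 1%:M.
Proof.
apply/matrixP => i l; rewrite mulmx_OmegaE OmegaE !mxE (inj_eq (@partner_inj S)).
case: eqP => [->|]; last by rewrite eq_sym => /eqP/negbTE->; rewrite mul0r oppr0.
by rewrite eqxx omega_sign_partner mulrN omega_sign_sqr.
Qed.

End Omega.
Arguments omega_sign {R S} k.

Section OmegaTrace.
Variables (R : realType) (S : nat).
Local Notation n := S.*2.
Local Notation Om := (Omega R S).

Definition omega_trace (G : 'M[R]_n) : R := \tr ((G *m Om) *m (G *m Om)).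

Lemma symplectic_inv (A : 'M[R]_n) : symplectic_mx A ->
  let B := - (Om *m A^T *m Om) in B *m A = 1%:M /\ A^T *m Om = Om *m B.
Proof.
move=> hA B; have hA' : A^T *m (Om *m A) = Om by rewrite mulmxA.
split; first by rewrite /B mulNmx -!mulmxA hA' Omega_sqr opprK.
by rewrite /B mulmxN !mulmxA Omega_sqr !mulNmx mul1mx opprK.
Qed.

Lemma symplectic_trmx (A : 'M[R]_n) : symplectic_mx A -> symplectic_mx A^T.
Proof.
move=> /symplectic_inv[/mulmx1C AB _]; rewrite /symplectic_mx trmxK.
have AOAtO : A *m Om *m A^T *m Om = - 1%:M.
  by move/(congr1 -%R): AB; rewrite mulmxN -!mulmxA opprK !mulmxA.
have := congr1 (mulmx^~ Om) AOAtO.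
by rewrite -mulmxA Omega_sqr mulmxN mulmx1 mulNmx mul1mx => /(congr1 -%R);
  rewrite !opprK.
Qed.

Lemma omega_trace_symplectic_congr (A G : 'M[R]_n) : symplectic_mx A ->
  omega_trace (A *m G *m A^T) = omega_trace G.
Proof.
move=> /symplectic_inv[BA AO]; set B := - _ in BA AO; rewrite /omega_trace.
have -> : A *m G *m A^T *m Om = A *m ((G *m Om) *m B) by rewrite -!mulmxA AO.
rewrite -mulmxA mxtrace_mulC !mulmxA.
by rewrite -[G *m Om *m B *m A]mulmxA BA mulmx1 -!mulmxA BA mulmx1.
Qed.

Lemma mxtrace_diag_mulOmega (d : 'I_n -> R) (N : 'M[R]_n) :
  \tr ((diag_mx (\row_k d k) *m Om) *m (N *m Om)) =
  - \sum_i d i * N (partner i) (partner i).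
Proof.
rewrite /mxtrace -sumrN; apply: eq_bigr => i _.
rewrite mxE (eq_bigr (fun k =>
  if k == partner i then d i * omega_sign i * (N *m Om) k i else 0)).
  rewrite sum_pick mulmx_OmegaE omega_sign_partner.
  by rewrite -[RHS]mulr1 -(omega_sign_sqr R i); ring.
move=> k _; rewrite mul_diag_mx [(\matrix_(_, _) _) i k]mxE mxE OmegaE.
by case: ifP; rewrite ?mulr0 ?mul0r.
Qed.

Lemma omega_trace_diag (d : 'I_n -> R) :
  omega_trace (diag_mx (\row_k d k)) = - \sum_k d k * d (partner k).
Proof.
rewrite /omega_trace mxtrace_diag_mulOmega; congr (- _).
by apply: eq_bigr => k _; rewrite !mxE eqxx mulr1n.
Qed.

Lemma omega_trace_williamson (G : 'M[R]_n) (nu : 'I_S -> R) : williamson G nu ->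
  omega_trace G = - \sum_i 2 * nu i ^+ 2.
Proof.
case=> A [hA ->]; rewrite omega_trace_symplectic_congr // omega_trace_diag.
rewrite sum_coords; congr (- _); apply: eq_bigr => i _.
rewrite !partner_coord !mode_of_coord; ring.
Qed.

Lemma same_multiset_sum (F : R -> R) (nu nu' : 'I_S -> R) :
  same_multiset nu nu' -> \sum_i F (nu i) = \sum_i F (nu' i).
Proof.
move=> eq_nu; transitivity (\sum_(v <- [seq nu i | i <- enum 'I_S]) F v).
  by rewrite big_map big_enum.
by rewrite (perm_big _ eq_nu) big_map big_enum.
Qed.

Lemma williamson_same_multiset (G G' : 'M[R]_n) (nu nu' : 'I_S -> R) :
  williamson G nu -> williamson G' nu' -> same_multiset nu nu' ->
  omega_trace G = omega_trace G'.
Proof.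
move=> /omega_trace_williamson-> /omega_trace_williamson-> eq_nu.
by rewrite (same_multiset_sum (fun v => 2 * v ^+ 2) eq_nu).
Qed.

End OmegaTrace.

Lemma psd2_form_ge0 (R : realFieldType) (a b c u v : R) :
  0 <= a -> 0 <= c -> b ^+ 2 <= a * c -> 0 <= a * u ^+ 2 + 2 * b * u * v + c * v ^+ 2.
Proof.
move=> a_ge0 c_ge0 hb; have [a0|a_neq0] := eqVneq a 0.
  rewrite a0 mul0r in hb; rewrite a0.
  have -> : b = 0 by apply/eqP; rewrite -sqrf_eq0 eq_le hb sqr_ge0.
  by rewrite mulr0 !mul0r !add0r mulr_ge0 ?sqr_ge0.
have a_gt0 : 0 < a by rewrite lt_def a_neq0.
rewrite -(pmulr_rge0 _ a_gt0).
have -> : a * (a * u ^+ 2 + 2 * b * u * v + c * v ^+ 2) =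
    (a * u + b * v) ^+ 2 + (a * c - b ^+ 2) * v ^+ 2 by ring.
by rewrite addr_ge0 ?sqr_ge0 // mulr_ge0 ?sqr_ge0 // subr_ge0.
Qed.

Lemma sympl_pair_form_ge0 (R : realFieldType) (a b s u v : R) :
  0 < a -> 1 <= a * b -> s ^+ 2 = 1 -> 0 <= a * u ^+ 2 + 2 * s * u * v + b * v ^+ 2.
Proof.
move=> a_gt0 hab hs; have b_gt0 : 0 < b by rewrite -(pmulr_rgt0 b a_gt0); lra.
by apply: psd2_form_ge0; [exact: ltW | exact: ltW | rewrite hs].
Qed.

Section QuadraticForms.
Variables (R : realType) (S : nat).
Local Notation n := S.*2.
Local Notation Om := (Omega R S).
Implicit Types (M N G : 'M[R]_n) (u v w d : 'I_n -> R).

Definition qform M w : R := \sum_i \sum_j M i j * (w i * w j).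

Definition symp_form u v : R := \sum_i \sum_j Om i j * (u i * v j).

Lemma qformD M N w : qform (M + N) w = qform M w + qform N w.
Proof.
rewrite /qform -big_split; apply: eq_bigr => i _ /=.
by rewrite -big_split; apply: eq_bigr => j _ /=; rewrite mxE mulrDl.
Qed.

Lemma qform_diag d w : qform (diag_mx (\row_k d k)) w = \sum_i d i * w i ^+ 2.
Proof.
apply: eq_bigr => i _; rewrite -(sum_pick i (fun j => d i * (w i * w j))).
apply: eq_bigr => j _; rewrite !mxE eq_sym mulrb.
by case: eqP => [->|]; rewrite ?expr2 ?mul0r.
Qed.

Lemma mx_qformE M (v : 'cV[R]_n) : (v^T *m M *m v) 0 0 = qform M (v^~ 0).
Proof.
rewrite mxE /qform exchange_big; apply: eq_bigr => j _.
rewrite mxE mulr_suml; apply: eq_bigr => i _.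
by rewrite mxE; ring.
Qed.

Lemma symp_formE u v : symp_form u v = \sum_i omega_sign i * (u i * v (partner i)).
Proof.
apply: eq_bigr => i _; rewrite -(sum_pick (partner i) (fun j => omega_sign i * (u i * v j))).
by apply: eq_bigr => j _; rewrite OmegaE; case: ifP; rewrite ?mul0r.
Qed.

Lemma skew_double_sum (F : 'I_n -> 'I_n -> R) :
  (forall i j, F j i = - F i j) -> \sum_i \sum_j F i j = 0.
Proof.
move=> F_skew; set T := (X in X = 0).
suff : T = - T by lra.
rewrite {1}/T exchange_big /T -sumrN; apply: eq_bigr => i _.
by rewrite -sumrN; apply: eq_bigr => j _; rewrite F_skew.
Qed.

Lemma symp_form_skew u v : symp_form u v = - symp_form v u.
Proof.
rewrite /symp_form [in RHS]exchange_big -sumrN; apply: eq_bigr => i _.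
by rewrite -sumrN; apply: eq_bigr => j _ /=; rewrite Omega_skew; ring.
Qed.

Lemma sum_partner_ge0 (t : 'I_n -> R) :
  (forall i, 0 <= t i + t (partner i)) -> 0 <= \sum_i t i.
Proof.
move=> t_ge0; have : 0 <= \sum_i (t i + t (partner i)) by exact: sumr_ge0.
by rewrite big_split /= sum_partner; lra.
Qed.

(* Pair each coordinate with its partner: on every mode the form splits into
   two binary forms whose discriminant is controlled by [d k * d (partner k) >= 1]. *)
Lemma diag_symp_form_ge0 d u v :
  (forall k, 0 < d k) -> (forall k, 1 <= d k * d (partner k)) ->
  0 <= qform (diag_mx (\row_k d k)) u + qform (diag_mx (\row_k d k)) v
       + 2 * symp_form v u.
Proof.
move=> d_gt0 d_pair; rewrite !qform_diag symp_formE mulr_sumr -!big_split /=.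
apply: sum_partner_ge0 => i; rewrite partnerK omega_sign_partner.
have s2 : omega_sign i ^+ 2 = 1 :> R by rewrite expr2 omega_sign_sqr.
have s2' : (- omega_sign i) ^+ 2 = 1 :> R by rewrite sqrrN.
have d_pair' : 1 <= d (partner i) * d i by rewrite mulrC.
have := sympl_pair_form_ge0 (u (partner i)) (v i) (d_gt0 (partner i)) d_pair' s2.
have := sympl_pair_form_ge0 (u i) (v (partner i)) (d_gt0 i) (d_pair i) s2'.
lra.
Qed.

Local Open Scope complex_scope.

Lemma Re_sum (I : finType) (F : I -> R[i]) :
  complex.Re (\sum_i F i) = \sum_i complex.Re (F i).
Proof. by elim/big_rec2: _ => //= i a b _ <-; case: (F i); case: b. Qed.

Lemma Im_sum (I : finType) (F : I -> R[i]) :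
  complex.Im (\sum_i F i) = \sum_i complex.Im (F i).
Proof. by elim/big_rec2: _ => //= i a b _ <-; case: (F i); case: b. Qed.

Lemma GammaiOmega_formE G u v : G^T = G ->
  let z := \col_k (u k +i* v k) in
  ((map_mx conjc z)^T *m GammaiOmega G *m z) 0 0 =
  (qform G u + qform G v + 2 * symp_form v u)%:C.
Proof.
move=> G_sym z.
have G_symE i j : G j i = G i j by rewrite -{1}G_sym mxE.
have -> : ((map_mx conjc z)^T *m GammaiOmega G *m z) 0 0 =
    \sum_i \sum_j (u i +i* v i)^* * Complex (G i j) (Om i j) * (u j +i* v j).
  rewrite mxE exchange_big; apply: eq_bigr => j _.
  rewrite mxE mulr_suml; apply: eq_bigr => i _.
  by rewrite !mxE.
apply/eqP; rewrite eq_complex /= Re_sum Im_sum; apply/andP; split; apply/eqP.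
  have -> : 2 * symp_form v u = symp_form v u - symp_form u v.
    by rewrite (symp_form_skew u v); ring.
  rewrite /qform /symp_form -sumrB -!big_split; apply: eq_bigr => i _ /=.
  by rewrite Re_sum -sumrB -!big_split; apply: eq_bigr => j _ /=; ring.
rewrite (eq_bigr (fun i => \sum_j complex.Im ((u i +i* v i)^* * Complex (G i j) (Om i j)
  * (u j +i* v j)))); last by move=> i _; rewrite Im_sum.
by apply: skew_double_sum => i j /=; rewrite G_symE Omega_skew; ring.
Qed.

Lemma psd_C_GammaiOmegaE G : G^T = G ->
  psd_C (GammaiOmega G) <-> forall u v, 0 <= qform G u + qform G v + 2 * symp_form v u.
Proof.
move=> G_sym; split => [G_psd u v | G_form z].
  by have := G_psd (\col_k (u k +i* v k)); rewrite GammaiOmega_formE // ler0c.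
have -> : z = \col_k (complex.Re (z k 0) +i* complex.Im (z k 0)).
  by apply/matrixP => k j; rewrite ord1 mxE; case: (z k 0).
by rewrite GammaiOmega_formE // ler0c.
Qed.

Lemma quantum_CM_diag d : (forall k, 0 < d k) -> (forall k, 1 <= d k * d (partner k)) ->
  quantum_CM (diag_mx (\row_k d k)).
Proof.
move=> d_gt0 d_pair; split; first exact: tr_diag_mx.
split; last by apply/psd_C_GammaiOmegaE; [exact: tr_diag_mx | move=> u v; exact: diag_symp_form_ge0].
move=> v v_neq0; rewrite mx_qformE qform_diag.
have [i0 vi0] : exists i, v i 0 != 0.
  apply/existsP; apply: contraNT v_neq0 => /existsPn v0.
  by apply/eqP/matrixP => i j; rewrite ord1 mxE; exact/eqP/negPn/v0.
rewrite (bigD1 i0) //=.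
have : 0 < d i0 * v i0 0 ^+ 2 by rewrite mulr_gt0 // exprn_even_gt0.
have : 0 <= \sum_(i | i != i0) d i * v i 0 ^+ 2.
  by apply: sumr_ge0 => i _; rewrite mulr_ge0 ?sqr_ge0 ?ltW.
lra.
Qed.

Lemma quantum_CM_add_psd G N : quantum_CM G -> N^T = N -> (forall w, 0 <= qform N w) ->
  quantum_CM (G + N).
Proof.
move=> [G_sym [G_pos G_psd]] N_sym N_psd.
have GN_sym : (G + N)^T = G + N by rewrite linearD /= G_sym N_sym.
split=> //; split.
  by move=> v /G_pos; rewrite !mx_qformE qformD; apply: ltr_wpDr.
apply/psd_C_GammaiOmegaE => // u v; rewrite !qformD.
have := (psd_C_GammaiOmegaE G_sym).1 G_psd u v; have := N_psd u; have := N_psd v.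
lra.
Qed.

End QuadraticForms.

Section PlaneBlock.
Variables (R : realType) (S : nat).
Local Notation n := S.*2.
Local Notation Om := (Omega R S).
Variables x y : 'I_n.
Hypothesis xy_mode : mode_of x != mode_of y.

Lemma neq_xy : x != y.
Proof. by apply: contraNneq xy_mode => ->. Qed.

Let yxF : (y == x) = false. Proof. by apply/negbTE; rewrite eq_sym neq_xy. Qed.

Definition plane_block (a b c : R) : 'M[R]_n := \matrix_(i, j)
  if i == x then (if j == x then a else if j == y then b else 0)
  else if i == y then (if j == x then b else if j == y then c else 0) else 0.

Definition diag_plane (d : 'I_n -> R) (a b c : R) : 'M[R]_n :=
  diag_mx (\row_k d k) + plane_block a b c.

Lemma sum_plane {T : nmodType} (F G : 'I_n -> T) :
  \sum_j (if j == x then F j else if j == y then G j else 0) = F x + G y.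
Proof.
rewrite (bigD1 x) //= eqxx (bigD1 y) /=; last by rewrite yxF.
rewrite yxF eqxx big1 ?addr0 // => j /andP[/negbTE-> /negbTE->] //.
Qed.

Lemma sum_plane_mul (A B : R) (F : 'I_n -> R) :
  \sum_j (if j == x then A else if j == y then B else 0) * F j = A * F x + B * F y.
Proof.
rewrite -(sum_plane (fun j => A * F j) (fun j => B * F j)); apply: eq_bigr => j _.
by case: ifP => _; [|case: ifP => _]; rewrite ?mul0r.
Qed.

Lemma qform_plane_block a b c w :
  qform (plane_block a b c) w = a * w x ^+ 2 + 2 * b * w x * w y + c * w y ^+ 2.
Proof.
rewrite /qform (eq_bigr (fun i => if i == x then a * (w i * w x) + b * (w i * w y)
   else if i == y then b * (w i * w x) + c * (w i * w y) else 0)).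
  by rewrite sum_plane; ring.
move=> i _; under eq_bigr => j _ do rewrite mxE.
case: (i == x); first by rewrite (sum_plane_mul _ _ (fun j => w i * w j)).
case: (i == y); first by rewrite (sum_plane_mul _ _ (fun j => w i * w j)).
by rewrite big1 // => j _; rewrite mul0r.
Qed.

Lemma trmx_plane_block a b c : (plane_block a b c)^T = plane_block a b c.
Proof. by apply/matrixP => i j; rewrite !mxE; do ![case: eqP => //= _]. Qed.

Lemma quantum_CM_diag_plane (d : 'I_n -> R) (a b c : R) :
  (forall k, 0 < d k) -> (forall k, 1 <= d k * d (partner k)) ->
  0 <= a -> 0 <= c -> b ^+ 2 <= a * c -> quantum_CM (diag_plane d a b c).
Proof.
move=> d_gt0 d_pair a_ge0 c_ge0 hb.
apply: quantum_CM_add_psd; [exact: quantum_CM_diag | exact: trmx_plane_block |].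
by move=> w; rewrite qform_plane_block psd2_form_ge0.
Qed.

Lemma omega_trace_diag_plane (d : 'I_n -> R) a b c :
  omega_trace (diag_plane d a b c) =
  - \sum_k d k * d (partner k) - 2 * (d (partner x) * a + d (partner y) * c).
Proof.
have x_out : (partner x != x) && (partner x != y).
  by rewrite partner_neq partner_neq_other_mode.
have y_out : (partner y != x) && (partner y != y).
  by rewrite partner_neq partner_neq_other_mode // eq_sym.
have block_out i j : (i != x) && (i != y) || (j != x) && (j != y) ->
    plane_block a b c i j = 0.
  by rewrite mxE => /orP[] /andP[/negbTE-> /negbTE->] //; do !case: ifP.
have tr_block2 : \tr ((plane_block a b c *m Om) *m (plane_block a b c *m Om)) = 0.
  rewrite /mxtrace big1 // => i _; rewrite mxE big1 // => k _.
  rewrite !mulmx_OmegaE; have [->|ix] := eqVneq i x.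
    by rewrite (block_out k) ?x_out ?orbT // !mul0r mulr0.
  have [->|iy] := eqVneq i y.
    by rewrite (block_out k) ?y_out ?orbT // !mul0r mulr0.
  by rewrite block_out ?ix ?iy // !mul0r.
rewrite /omega_trace /diag_plane !mulmxDl !mulmxDr !mxtraceD tr_block2 addr0.
rewrite [\tr ((plane_block a b c *m Om) *m _)]mxtrace_mulC !mxtrace_diag_mulOmega.
have -> : \sum_i d i * diag_mx (\row_k d k) (partner i) (partner i) =
    \sum_k d k * d (partner k).
  by apply: eq_bigr => i _; rewrite !mxE eqxx mulr1n.
have -> : \sum_i d i * plane_block a b c (partner i) (partner i) =
    d (partner x) * a + d (partner y) * c.
  rewrite -(sum_partner (fun i => d i * plane_block a b c (partner i) (partner i))).
  rewrite (eq_bigr (fun i => (if i == x then a else if i == y then c else 0) * d (partner i))).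
    by rewrite sum_plane_mul !(mulrC (d _)).
  move=> i _; rewrite partnerK mulrC mxE.
  by case: eqP => [->|_]; rewrite ?eqxx //; case: eqP => [->|_]; rewrite ?eqxx ?yxF.
ring.
Qed.

End PlaneBlock.

Section PlaneRotation.
Variables (R : realType) (S : nat).
Local Notation n := S.*2.
Variables x y : 'I_n.
Hypothesis xy_mode : mode_of x != mode_of y.

Let xyF : (x == y) = false. Proof. exact: negbTE (neq_xy xy_mode). Qed.
Let yxF : (y == x) = false. Proof. by rewrite eq_sym xyF. Qed.

Lemma diag_plane_shift (d d' : 'I_n -> R) a b c :
  (forall k, k != x -> k != y -> d' k = d k) ->
  diag_plane x y d a b c = diag_plane x y d' (a + (d x - d' x)) b (c + (d y - d' y)).
Proof.
move=> dd'; apply/matrixP => i j; rewrite /diag_plane !mxE.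
have [ix|ix] := eqVneq i x; first subst i.
  have [jx|jx] := eqVneq j x; first by subst j; rewrite ?eqxx ?mulr1n; ring.
  by rewrite !mulr0n.
have [iy|iy] := eqVneq i y; first subst i.
  have [jy|jy] := eqVneq j y; first by subst j; rewrite ?eqxx ?yxF ?mulr1n; ring.
  by rewrite !mulr0n.
by rewrite dd'.
Qed.

Variables cs sn : R.
Hypothesis cs_sn : cs ^+ 2 + sn ^+ 2 = 1.

Definition plane_rot : 'M[R]_n := \matrix_(k, i)
  if i == x then (if k == x then cs else if k == y then - sn else 0)
  else if i == y then (if k == x then sn else if k == y then cs else 0)
  else (k == i)%:R.

Lemma plane_rot_mul_col i (g : 'I_n -> R) : \sum_k plane_rot k i * g k =
  if i == x then cs * g x - sn * g y else if i == y then sn * g x + cs * g y else g i.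
Proof.
under eq_bigr => k _ do rewrite mxE.
case: (i == x); first by rewrite (sum_plane_mul xy_mode) mulNr.
case: (i == y); first by rewrite (sum_plane_mul xy_mode).
rewrite -(sum_pick i g); apply: eq_bigr => k _.
by case: eqP; rewrite ?mul1r ?mul0r.
Qed.

Let eq_mod_cs_sn (E E' K : R) : E - E' = K * (cs ^+ 2 + sn ^+ 2 - 1) -> E = E'.
Proof. by rewrite cs_sn subrr mulr0 => /eqP; rewrite subr_eq0 => /eqP. Qed.

Lemma plane_rot_orthogonal : orthogonal_mx plane_rot.
Proof.
apply/matrixP => i j; rewrite mxE (eq_bigr (fun k => plane_rot k i * plane_rot k j)).
  rewrite plane_rot_mul_col !mxE.
  have [->|ix] := eqVneq i x; rewrite ?eqxx.
    have [jx|jx] := eqVneq j x; first subst j; rewrite ?eqxx ?xyF ?yxF /=.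
      by apply: (eq_mod_cs_sn (K := 1)); ring.
    have [jy|jy] := eqVneq j y; first subst j; rewrite ?eqxx ?xyF ?yxF /=; first ring.
    by rewrite !mulr0 subrr.
  have [->|iy] := eqVneq i y; rewrite ?eqxx ?yxF.
    have [jx|jx] := eqVneq j x; first subst j; rewrite ?eqxx ?xyF ?yxF /=; first ring.
    have [jy|jy] := eqVneq j y; first subst j; rewrite ?eqxx ?xyF ?yxF /=.
      by apply: (eq_mod_cs_sn (K := 1)); ring.
    by rewrite !mulr0 addr0.
  have [jx|jx] := eqVneq j x; first by subst j; rewrite (negbTE ix).
  by have [jy|jy] := eqVneq j y; first by subst j; rewrite (negbTE iy).
by move=> k _; rewrite mxE.
Qed.

Lemma plane_rot_conj_diag (d : 'I_n -> R) :
  plane_rot^T *m diag_mx (\row_k d k) *m plane_rot =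
  diag_plane x y d (sn ^+ 2 * (d y - d x)) (- (cs * sn * (d y - d x)))
                   (- (sn ^+ 2 * (d y - d x))).
Proof.
apply/matrixP => i j; rewrite mxE (eq_bigr (fun k => plane_rot k i * (d k * plane_rot k j))).
  rewrite plane_rot_mul_col /diag_plane !mxE.
  have [->|ix] := eqVneq i x; rewrite ?eqxx.
    have [jx|jx] := eqVneq j x; first subst j; rewrite ?eqxx ?xyF ?yxF /=.
      by apply: (eq_mod_cs_sn (K := d x)); ring.
    have [jy|jy] := eqVneq j y; first subst j; rewrite ?eqxx ?xyF ?yxF /=; first ring.
    by rewrite !mulr0 subrr mulr0n addr0.
  have [->|iy] := eqVneq i y; rewrite ?eqxx ?yxF.
    have [jx|jx] := eqVneq j x; first subst j; rewrite ?eqxx ?xyF ?yxF /=; first ring.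
    have [jy|jy] := eqVneq j y; first subst j; rewrite ?eqxx ?xyF ?yxF /=.
      by apply: (eq_mod_cs_sn (K := d y)); ring.
    by rewrite /= !mulr0 mulr0n !addr0.
  have [jx|jx] := eqVneq j x; first by subst j; rewrite (negbTE ix) mulr0 mulr0n addr0.
  have [jy|jy] := eqVneq j y; first by subst j; rewrite (negbTE iy) mulr0 mulr0n addr0.
  by rewrite mulr_natr addr0.
by move=> k _; rewrite mul_mx_diag !mxE mulrA.
Qed.

Lemma omega_trace_plane_rot_conj_diag (d : 'I_n -> R) :
  omega_trace (plane_rot^T *m diag_mx (\row_k d k) *m plane_rot) =
  omega_trace (diag_mx (\row_k d k))
  - 2 * sn ^+ 2 * (d y - d x) * (d (partner x) - d (partner y)).
Proof. by rewrite plane_rot_conj_diag omega_trace_diag_plane // omega_trace_diag; ring. Qed.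

End PlaneRotation.

Lemma char_poly_orthogonal_conj (R : comUnitRingType) n (O M : 'M[R]_n) :
  O^T *m O = 1%:M -> char_poly (O^T *m M *m O) = char_poly M.
Proof.
move=> OtO; rewrite /char_poly /char_poly_mx.
set Op := map_mx polyC O.
have OptOp : Op^T *m Op = 1%:M by rewrite /Op map_trmx -map_mxM OtO map_mx1.
have -> : 'X%:M - map_mx polyC (O^T *m M *m O) = Op^T *m ('X%:M - map_mx polyC M) *m Op.
  rewrite !map_mxM -map_trmx -/Op mulmxBr mulmxBl; congr (_ - _).
  by rewrite -mulmxA -scalar_mxC mulmxA OptOp mul1mx.
by rewrite !det_mulmx mulrAC -det_mulmx OptOp det1 mul1r.
Qed.

Lemma char_poly_diag (R : comNzRingType) n (d : 'I_n -> R) :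
  char_poly (diag_mx (\row_k d k)) = \prod_k ('X - (d k)%:P).
Proof.
rewrite char_poly_trig ?diag_mx_is_trig //; apply: eq_bigr => i _.
by rewrite !mxE eqxx mulr1n.
Qed.

Lemma matching_equiv_euclidean (R : realType) S (Lam : 'I_(S.*2) -> R) m m1 m2 :
  matching_equiv Lam m m1 -> matching_equiv Lam m m2 -> matching_equiv Lam m1 m2.
Proof.
move=> [s1 [s1_Lam s1_m]] [s2 [s2_Lam s2_m]].
exists (s1^-1 * s2)%g; split => k; rewrite !permM.
  by rewrite s2_Lam -{2}(permKV s1 k) s1_Lam.
rewrite s2_m; congr (s2 _); apply: (@perm_inj _ s1).
by rewrite -s1_m !permKV.
Qed.

Section ThermalSpectrum.
Variables (R : realType) (S : nat).
Local Notation n := S.*2.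
Variables (nu r : 'I_S -> R).
Hypothesis nu_ge1 : forall i, 1 <= nu i.

Lemma Ddiag_coord i b :
  Ddiag nu r (coord i b) = if b then nu i * expR (2 * r i) else nu i * expR (- (2 * r i)).
Proof. by rewrite /Ddiag odd_coord mode_of_coord. Qed.

Lemma Ddiag_gt0 k : 0 < Ddiag nu r k.
Proof.
have nu_gt0 := lt_le_trans ltr01 (nu_ge1 (mode_of k)).
by rewrite /Ddiag; case: (odd k); rewrite mulr_gt0 ?expR_gt0.
Qed.

Lemma Ddiag_mul_partner k : Ddiag nu r k * Ddiag nu r (partner k) = nu (mode_of k) ^+ 2.
Proof.
have := expRxMexpNx_1 (2 * r (mode_of k)).
rewrite /Ddiag mode_of_partner odd_partner.
set E := expR _; set E' := expR _ => EE'.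
transitivity (nu (mode_of k) ^+ 2 * (E * E')); last by rewrite EE' mulr1.
by case: (odd k) => /=; ring.
Qed.

Lemma Ddiag_mul_partner_ge1 k : 1 <= Ddiag nu r k * Ddiag nu r (partner k).
Proof. by rewrite Ddiag_mul_partner expr2; have := nu_ge1 (mode_of k); nra. Qed.

Lemma omega_trace_Dmat : omega_trace (Dmat nu r) = - \sum_i 2 * nu i ^+ 2.
Proof.
rewrite /Dmat omega_trace_diag; congr (- _); rewrite sum_coords.
apply: eq_bigr => i _; rewrite !Ddiag_mul_partner !mode_of_coord; ring.
Qed.

Variables (Lam : 'I_n -> R) (tau : {perm 'I_n}).
Hypothesis Lam_tau : forall k, Lam (tau k) = Ddiag nu r k.

Lemma eigenspectrum_Dmat : eigenspectrum (Dmat nu r) Lam.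
Proof.
rewrite /eigenspectrum /Dmat char_poly_diag [RHS](reindex_inj (@perm_inj _ tau)).
by apply: eq_bigr => k _; rewrite Lam_tau.
Qed.

Definition coord_matching (k : 'I_n) : 'I_n := tau (partner ((tau^-1)%g k)).

Lemma coord_matching_tau i b : coord_matching (tau (coord i b)) = tau (coord i (~~ b)).
Proof. by rewrite /coord_matching permK partner_coord. Qed.

Lemma perfect_coord_matching : perfect_matching Lam coord_matching.
Proof.
move=> k; split.
- by rewrite /coord_matching permK partnerK permKV.
- rewrite /coord_matching -{2}(permKV tau k) (inj_eq perm_inj); exact: partner_neq.
- by rewrite /coord_matching -{1}(permKV tau k) !Lam_tau Ddiag_mul_partner_ge1.
Qed.

Lemma n_pure_coord_matching :
  (forall i : 'I_S, (0 < i)%N -> nu i = 1) -> (S.-1 <= n_pure Lam coord_matching)%N.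
Proof.
move=> nu1; rewrite /n_pure; set pure := [set k | _ & _].
pose low (i : 'I_S) : 'I_n := if (tau (coord i false) < tau (coord i true))%N
  then tau (coord i false) else tau (coord i true).
pose B := [set i : 'I_S | (0 < i)%N].
have [S0|S_gt0] := posnP S; first by have -> : S.-1 = 0%N by rewrite S0.
have card_B : #|B| = S.-1.
  have -> : B = [set~ Ordinal S_gt0] by apply/setP => i; rewrite !inE lt0n.
  by rewrite cardsC1 card_ord.
have pure_low : low @: B \subset pure.
  apply/subsetP => _ /imsetP [i i_gt0 ->]; rewrite inE in i_gt0; rewrite inE /low.
  have pure_i b : Lam (tau (coord i b)) * Lam (coord_matching (tau (coord i b))) == 1.
    by rewrite coord_matching_tau !Lam_tau -partner_coord Ddiag_mul_partner
      mode_of_coord nu1 // expr1n.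
  have neq_i : tau (coord i true) != tau (coord i false).
    by rewrite (inj_eq perm_inj) eq_coordE !odd_coord andbF.
  case: ifP => lt_i; rewrite pure_i andbT coord_matching_tau //=.
  by rewrite ltn_neqAle leqNgt lt_i andbT; apply: contra neq_i => /eqP/val_inj->.
have low_inj : {in B &, injective low}.
  move=> i j _ _.
  have same_mode b b' : tau (coord i b) = tau (coord j b') -> i = j.
    by move=> /perm_inj/(congr1 (@mode_of S)); rewrite !mode_of_coord.
  by rewrite /low; case: ifP => _; case: ifP => _ /same_mode.
by rewrite -card_B -(card_in_imset low_inj) subset_leq_card.
Qed.

Lemma second_thermal_gt1 (hS : (2 <= S)%N) :
  unique_pairing Lam -> ~ t_pure_unique_pairing S.-1 Lam ->
  (forall i j : 'I_S, (i <= j)%N -> nu j <= nu i) -> 1 < nu (Ordinal hS).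
Proof.
move=> [m [_ m_unique]] not_pure nu_desc; rewrite ltNge; apply/negP => nu1_le1.
apply: not_pure; exists coord_matching; split; first exact: perfect_coord_matching.
split.
  by move=> m' /m_unique; apply: matching_equiv_euclidean; exact/m_unique/perfect_coord_matching.
apply: n_pure_coord_matching => i i_gt0; apply/le_anti; rewrite nu_ge1 andbT.
exact: le_trans (nu_desc (Ordinal hS) i i_gt0) nu1_le1.
Qed.

End ThermalSpectrum.

(* [t = e^2 dx dy / (dx + dy)^2] is small enough that rotating by an angle with
   [sin^2 = t] keeps the [e]-fraction of the diagonal [(dx, dy)] dominant. *)
Lemma exists_rotation_parameter (R : realFieldType) (dx dy e : R) :
  0 < dx -> 0 < dy -> 0 < e -> e <= 1 ->
  exists2 t, 0 < t <= 1 &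
  [/\ 0 <= e * dx + t * (dy - dx), 0 <= e * dy - t * (dy - dx) &
      (1 - t) * t * (dy - dx) ^+ 2 <= (e * dx + t * (dy - dx)) * (e * dy - t * (dy - dx))].
Proof.
move=> dx_gt0 dy_gt0 e_gt0 e_le1.
set M := dx + dy; set k := dx * dy / M ^+ 2; set t := e ^+ 2 * k.
have M_gt0 : 0 < M by rewrite /M; lra.
have kM2 : k * M ^+ 2 = dx * dy by rewrite /k divfK // gt_eqF // exprn_gt0.
have k_gt0 : 0 < k by rewrite /k divr_gt0 ?mulr_gt0 ?exprn_gt0.
have kM_le (z : R) : dx * dy <= z * M -> k * M <= z.
  by move=> dxy; rewrite -(ler_pM2r M_gt0) -mulrA -expr2 kM2.
have kM_dx : k * M <= dx by apply: kM_le; rewrite /M; nra.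
have kM_dy : k * M <= dy by apply: kM_le; rewrite /M; nra.
have k_le1 : k <= 1.
  by rewrite -(ler_pM2r (exprn_gt0 2 M_gt0)) kM2 mul1r /M; nra.
have e2_le_e : e ^+ 2 <= e by rewrite expr2; nra.
have t_gt0 : 0 < t by rewrite /t mulr_gt0 ?exprn_gt0.
have tM_dx : t * M <= e * dx by rewrite /t -mulrA; nra.
have tM_dy : t * M <= e * dy by rewrite /t -mulrA; nra.
have t_dxy : t * (dy - dx) ^+ 2 <= e ^+ 2 * (dx * dy).
  rewrite -kM2 /t -mulrA ler_pM2l ?exprn_gt0 // ler_pM2l //.
  by rewrite /M; nra.
exists t; first by rewrite t_gt0 /t; nra.
split; [rewrite /M in tM_dx; nra | rewrite /M in tM_dy; nra |].
have : 0 <= e * t * (dy - dx) ^+ 2.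
  by apply: mulr_ge0; [apply: mulr_ge0; exact: ltW | exact: sqr_ge0].
have -> : (e * dx + t * (dy - dx)) * (e * dy - t * (dy - dx)) =
  e ^+ 2 * (dx * dy) + e * t * (dy - dx) ^+ 2 - t ^+ 2 * (dy - dx) ^+ 2 by ring.
have -> : (1 - t) * t * (dy - dx) ^+ 2 = t * (dy - dx) ^+ 2 - t ^+ 2 * (dy - dx) ^+ 2 by ring.
lra.
Qed.

Section RotatedThermalState.
Variables (R : realType) (S : nat).
Local Notation n := S.*2.
Variables (d : 'I_n -> R) (x y : 'I_n).
Hypotheses (xy_mode : mode_of x != mode_of y)
  (d_gt0 : forall k, 0 < d k) (d_pair : forall k, 1 <= d k * d (partner k))
  (y_impure : 1 < d y * d (partner y))
  (y_le_x : d y * d (partner y) <= d x * d (partner x)).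

Let kappa := (d y * d (partner y))^-1.

Let y_pair_gt0 : 0 < d y * d (partner y). Proof. exact: lt_trans ltr01 y_impure. Qed.
Let kappa_gt0 : 0 < kappa. Proof. by rewrite invr_gt0. Qed.
Let kappa_lt1 : kappa < 1. Proof. by rewrite invf_lt1. Qed.
Let kappa_y : kappa * (d y * d (partner y)) = 1.
Proof. by rewrite mulVf // gt_eqF. Qed.

(* Scaling [d x] and [d y] down by [kappa] makes mode [y] pure and keeps every
   mode physical; the freed diagonal weight absorbs the rotated block. *)
Definition rescale_xy (k : 'I_n) : R :=
  if k == x then kappa * d x else if k == y then kappa * d y else d k.

Lemma rescale_xy_other k : k != x -> k != y -> rescale_xy k = d k.
Proof. by rewrite /rescale_xy => /negbTE-> /negbTE->. Qed.

Lemma rescale_xy_gt0 k : 0 < rescale_xy k.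
Proof. by rewrite /rescale_xy; case: ifP => _; [|case: ifP => _]; rewrite ?mulr_gt0. Qed.

Lemma rescale_xy_x : rescale_xy x = kappa * d x.
Proof. by rewrite /rescale_xy eqxx. Qed.

Lemma rescale_xy_y : rescale_xy y = kappa * d y.
Proof. by rewrite /rescale_xy eqxx eq_sym (negbTE (neq_xy xy_mode)). Qed.

Lemma rescale_xy_pair k : 1 <= rescale_xy k * rescale_xy (partner k).
Proof.
have rx := rescale_xy_x; have ry := rescale_xy_y.
have rpx : rescale_xy (partner x) = d (partner x).
  by rewrite rescale_xy_other ?partner_neq ?partner_neq_other_mode.
have rpy : rescale_xy (partner y) = d (partner y).
  by rewrite rescale_xy_other ?partner_neq ?partner_neq_other_mode // eq_sym.
have kappa_x : 1 <= kappa * (d x * d (partner x)) by rewrite -kappa_y ler_pM2l.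
have [kx|kx] := eqVneq k x; first by subst k; rewrite rx rpx -mulrA.
have [ky|ky] := eqVneq k y; first by subst k; rewrite ry rpy -mulrA kappa_y.
have [pkx|pkx] := eqVneq (partner k) x.
  have -> : k = partner x by rewrite -pkx partnerK.
  by rewrite partnerK rx rpx mulrC -mulrA.
have [pky|pky] := eqVneq (partner k) y.
  have -> : k = partner y by rewrite -pky partnerK.
  by rewrite partnerK ry rpy mulrC -mulrA kappa_y.
by rewrite !rescale_xy_other.
Qed.

Lemma exists_rotation_quantum_CM : d x != d y -> d (partner x) != d (partner y) ->
  exists O, [/\ orthogonal_mx O, quantum_CM (O^T *m diag_mx (\row_k d k) *m O)
    & omega_trace (O^T *m diag_mx (\row_k d k) *m O) != omega_trace (diag_mx (\row_k d k))].
Proof.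
move=> dxy dpxy.
have e_gt0 : 0 < 1 - kappa by rewrite subr_gt0.
have e_le1 : 1 - kappa <= 1 by rewrite lerBlDr lerDl ltW.
have [t /andP[t_gt0 t_le1] [a_ge0 c_ge0 b_le]] :=
  exists_rotation_parameter (d_gt0 x) (d_gt0 y) e_gt0 e_le1.
set sn := Num.sqrt t; set cs := Num.sqrt (1 - t).
have sn2 : sn ^+ 2 = t by rewrite sqr_sqrtr // ltW.
have cs2 : cs ^+ 2 = 1 - t by rewrite sqr_sqrtr // subr_ge0.
have cs_sn : cs ^+ 2 + sn ^+ 2 = 1 by rewrite sn2 cs2 subrK.
exists (plane_rot x y cs sn); split.
- exact: plane_rot_orthogonal.
- rewrite plane_rot_conj_diag // (diag_plane_shift xy_mode (d' := rescale_xy));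
    last exact: rescale_xy_other.
  rewrite rescale_xy_x rescale_xy_y sn2.
  have -> : t * (d y - d x) + (d x - kappa * d x) = (1 - kappa) * d x + t * (d y - d x).
    by ring.
  have -> : - (t * (d y - d x)) + (d y - kappa * d y) = (1 - kappa) * d y - t * (d y - d x).
    by ring.
  apply: (quantum_CM_diag_plane xy_mode rescale_xy_gt0 rescale_xy_pair) => //.
  by rewrite -[X in X <= _](_ : (1 - t) * t * (d y - d x) ^+ 2 = _) // -cs2 -sn2; ring.
- rewrite omega_trace_plane_rot_conj_diag // sn2 -subr_eq0 addrAC subrr add0r oppr_eq0.
  have dyx : d y - d x != 0 by rewrite subr_eq0 eq_sym.
  have dpxy' : d (partner x) - d (partner y) != 0 by rewrite subr_eq0.
  by rewrite !mulf_neq0 // ?pnatr_eq0 // gt_eqF.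
Qed.
End RotatedThermalState.

Lemma no_triple_cross_pairs (T : eqType) (a1 b1 a2 b2 : T) :
  (forall v, count_mem v [:: a1; b1; a2; b2] < 3)%N ->
  (a1 != a2) && (b1 != b2) || (a1 != b2) && (b1 != a2).
Proof.
move=> no_triple; apply/negPn/negP; rewrite negb_or !negb_and !negbK.
case/andP=> /orP[]/eqP e1 /orP[]/eqP e2.
- by move: (no_triple a1); rewrite /= -e1 -e2 !eqxx; case: (_ == _).
- by move: (no_triple a1); rewrite /= -e1 e2 -e1 !eqxx.
- by move: (no_triple b2); rewrite /= e1 e2 !eqxx; case: (_ == _).
- by move: (no_triple b1); rewrite /= -e1 -e2 !eqxx; case: (_ == _).
Qed.

Lemma exists_plane_coords (R : realType) S (d : 'I_(S.*2) -> R) (i j : 'I_S) :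
  (forall v, count_mem v
     [:: d (coord i false); d (coord i true); d (coord j false); d (coord j true)] < 3)%N ->
  exists x y, [/\ mode_of x = i, mode_of y = j, d x != d y & d (partner x) != d (partner y)].
Proof.
case/no_triple_cross_pairs/orP => /andP[neq1 neq2].
  by exists (coord i false), (coord j false); rewrite !partner_coord !mode_of_coord.
by exists (coord i false), (coord j true); rewrite !partner_coord !mode_of_coord.
Qed.

Theorem proposition1 (R : realType) (S : nat) (hS : (2 <= S)%N)
    (Lam : 'I_(S.*2) -> R)
    (hLam : exists G : 'M[R]_(S.*2), quantum_CM G /\ eigenspectrum G Lam)
    (hdesc : nonascending Lam)
    (hup : unique_pairing Lam)
    (hnotpure : ~ t_pure_unique_pairing S.-1 Lam)
    (nu r : 'I_S -> R)
    (hr : forall i, 0 <= r i) (hnu : forall i, 1 <= nu i)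
    (hnudesc : forall i j : 'I_S, (i <= j)%N -> nu j <= nu i)
    (hpairs : exists tau : {perm 'I_(S.*2)}, forall k, Lam (tau k) = Ddiag nu r k)
    (h4 : forall x : R,
        (count (pred1 x)
           [:: nu (Ordinal (ltnW hS)) * expR (- (2 * r (Ordinal (ltnW hS))));
               nu (Ordinal (ltnW hS)) * expR (2 * r (Ordinal (ltnW hS)));
               nu (Ordinal hS) * expR (- (2 * r (Ordinal hS)));
               nu (Ordinal hS) * expR (2 * r (Ordinal hS))]%R < 3)%N) :
  (exists O : 'M[R]_(S.*2), orthogonal_mx O /\
      quantum_CM (O^T *m Dmat nu r *m O) /\
      symp_eigs_differ (O^T *m Dmat nu r *m O) nu)
  /\
  (exists G1 G2 : 'M[R]_(S.*2),
      [/\ quantum_CM G1, quantum_CM G2, eigenspectrum G1 Lam, eigenspectrum G2 Lam &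
          forall nu1 nu2, williamson G1 nu1 -> williamson G2 nu2 ->
            ~~ same_multiset nu1 nu2])
  /\
  (exists G1 G2 : 'M[R]_(S.*2),
      [/\ quantum_CM G1, quantum_CM G2, eigenspectrum G1 Lam, eigenspectrum G2 Lam &
          (exists O, orthogonal_mx O /\ G2 = O^T *m G1 *m O) /\
          ~ (exists A, SpO A /\ G2 = A^T *m G1 *m A)]).
Proof.
have [tau Lam_tau] := hpairs.
set i0 : 'I_S := Ordinal (ltnW hS); set i1 : 'I_S := Ordinal hS.
have nu1_gt1 : 1 < nu i1 := second_thermal_gt1 hnu Lam_tau hS hup hnotpure hnudesc.
have [|x [y [x_i0 y_i1 dxy dpxy]]] := @exists_plane_coords R S (Ddiag nu r) i0 i1.
  by move=> v; rewrite !Ddiag_coord; exact: h4.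
have xy_mode : mode_of x != mode_of y by rewrite x_i0 y_i1.
have [||O [O_orth G_qCM G_trace]] := exists_rotation_quantum_CM xy_mode
    (Ddiag_gt0 r hnu) (Ddiag_mul_partner_ge1 r hnu) _ _ dxy dpxy.
- by rewrite Ddiag_mul_partner y_i1 expr2; nra.
- rewrite !Ddiag_mul_partner x_i0 y_i1 !expr2.
  by have := hnudesc i0 i1 isT; have := hnu i1; nra.
rewrite -/(Dmat nu r) in G_qCM G_trace; set G := O^T *m Dmat nu r *m O in G_qCM G_trace *.
have D_qCM : quantum_CM (Dmat nu r).
  exact: quantum_CM_diag (Ddiag_gt0 r hnu) (Ddiag_mul_partner_ge1 r hnu).
have D_spec : eigenspectrum (Dmat nu r) Lam := eigenspectrum_Dmat Lam_tau.
have G_spec : eigenspectrum G Lam by rewrite /eigenspectrum char_poly_orthogonal_conj.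
split; [|split].
- exists O; do 2!split=> //; move=> nu' /omega_trace_williamson G_nu'.
  apply/negP => /(same_multiset_sum (fun v => 2 * v ^+ 2)) eq_nu.
  by move: G_trace; rewrite G_nu' eq_nu -(@omega_trace_Dmat _ _ nu r) eqxx.
- exists (Dmat nu r), G; split=> // nu1 nu2 D_nu1 G_nu2; apply/negP.
  by move=> /(williamson_same_multiset D_nu1 G_nu2) eq_tr; rewrite eq_tr eqxx in G_trace.
- exists (Dmat nu r), G; split=> //; split; first by exists O.
  case=> A [[_ A_sympl] G_A]; move: G_trace; rewrite G_A.
  by have := omega_trace_symplectic_congr (Dmat nu r) (symplectic_trmx A_sympl);
    rewrite trmxK => ->; rewrite eqxx.
Qed.
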